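(* Let $\mathcal{C}$ be a pre-Hilbert $*$-category and $\mathrm{Con}(\mathcal{C})$ its wide subcategory of contractions. (i) Every split monomorphism in $\mathrm{Con}(\mathcal{C})$ is isometric. (ii) The inclusion functor $\mathrm{Con}(\mathcal{C})\hookrightarrow\mathcal{C}$ preserves jointly monic wide spans. (iii) The inclusion functor $\mathrm{Con}(\mathcal{C})\hookrightarrow\mathcal{C}$ creates isometric equalisers; in particular, in $\mathrm{Con}(\mathcal{C})$ every parallel pair of morphisms has an isometric equaliser. (iv) In $\mathrm{Con}(\mathcal{C})$, every equaliser is isometric.
   Context: A $*$-category is a category with a choice of $f^*\colon Y\to X$ for each $f\colon X\to Y$ such that $1^*=1$, $(gf)^*=f^*g^*$, $(f^* )^*=f$; $f$ is an isometry if $f^*f=1$. A pre-Hilbert $*$-category is a $*$-category with (R1) a zero object, (R2) orthonormal biproducts of all pairs of objects (biproducts $(X,s_1,r_1,s_2,r_2)$ with $r_k=s_k^*$), (R3) an isometric kernel for every morphism, and (R4) every diagonal $\Delta\colon X\to X\oplus X$ a kernel of some morphism; such a category is additive. For Hermitian endomorphisms $a,b$ of $A$, $a\le b$ means $b-a=y^*y$ for some $y\colon A\to Y$. A contraction is a morphism $f$ with $f^*f\leq 1$; contractions contain all identities and are closed under composition and $*$, forming the wide $*$-subcategory $\mathrm{Con}(\mathcal{C})$. A wide span $(g_\alpha\colon Y\to Z_\alpha)_{\alpha\in I}$ is jointly monic if $g_\alpha h_1=g_\alpha h_2$ for all $\alpha$ implies $h_1=h_2$. ''Creates isometric equalisers''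 here means: for any parallel pair of contractions, an isometric equaliser of it in $\mathcal{C}$ is a morphism of $\mathrm{Con}(\mathcal{C})$ and is an equaliser of the pair in $\mathrm{Con}(\mathcal{C})$. *)

Set Implicit Arguments.
Unset Strict Implicit.

Record StarCat := {
  Ob : Type;
  Hom : Ob -> Ob -> Type;
  idm : forall X : Ob, Hom X X;
  comp : forall X Y Z : Ob, Hom Y Z -> Hom X Y -> Hom X Z;
  star : forall X Y : Ob, Hom X Y -> Hom Y X;
  comp_assoc : forall (W X Y Z : Ob) (h : Hom Y Z) (g : Hom X Y) (f : Hom W X),
      comp h (comp g f) = comp (comp h g) f;
  comp_idl : forall (X Y : Ob) (f : Hom X Y), comp (idm Y) f = f;
  comp_idr : forall (X Y : Ob) (f : Hom X Y), comp f (idm X) = f;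
  star_idm : forall X : Ob, star (idm X) = idm X;
  star_comp : forall (X Y Z : Ob) (g : Hom Y Z) (f : Hom X Y),
      star (comp g f) = comp (star f) (star g);
  star_star : forall (X Y : Ob) (f : Hom X Y), star (star f) = f
}.

Arguments Hom : clear implicits.
Arguments idm {s} X : rename.
Arguments comp {s X Y Z} g f : rename.
Arguments star {s X Y} f : rename.

Section Defs.
Variable C : StarCat.

Notation "g \o f" := (comp g f) (at level 40, left associativity).

Definition isometry {X Y : Ob C} (f : Hom C X Y) : Prop := star f \o f = idm X.

Definition is_zero_obj (Z : Ob C) : Prop :=
  (forall X : Ob C, exists u : Hom C X Z, forall v : Hom C X Z, v = u) /\
  (forall X : Ob C, exists u : Hom C Z X, forall v : Hom C Z X, v = u).

Definition is_zero_mor {X Y : Ob C} (f : Hom C X Y) : Prop :=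
  exists (Z : Ob C) (a : Hom C X Z) (b : Hom C Z Y), is_zero_obj Z /\ f = b \o a.

Definition is_biproduct (X1 X2 W : Ob C)
    (s1 : Hom C X1 W) (r1 : Hom C W X1) (s2 : Hom C X2 W) (r2 : Hom C W X2) : Prop :=
  r1 \o s1 = idm X1 /\ r2 \o s2 = idm X2 /\
  is_zero_mor (r2 \o s1) /\ is_zero_mor (r1 \o s2) /\
  (forall (A : Ob C) (f1 : Hom C A X1) (f2 : Hom C A X2),
      exists h : Hom C A W, r1 \o h = f1 /\ r2 \o h = f2 /\
        forall h' : Hom C A W, r1 \o h' = f1 -> r2 \o h' = f2 -> h' = h) /\
  (forall (A : Ob C) (f1 : Hom C X1 A) (f2 : Hom C X2 A),
      exists h : Hom C W A, h \o s1 = f1 /\ h \o s2 = f2 /\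
        forall h' : Hom C W A, h' \o s1 = f1 -> h' \o s2 = f2 -> h' = h).

Definition is_ortho_biproduct (X1 X2 W : Ob C)
    (s1 : Hom C X1 W) (r1 : Hom C W X1) (s2 : Hom C X2 W) (r2 : Hom C W X2) : Prop :=
  is_biproduct s1 r1 s2 r2 /\ r1 = star s1 /\ r2 = star s2.

Definition is_kernel {K X Y : Ob C} (k : Hom C K X) (f : Hom C X Y) : Prop :=
  is_zero_mor (f \o k) /\
  forall (A : Ob C) (h : Hom C A X), is_zero_mor (f \o h) ->
    exists u : Hom C A K, k \o u = h /\ forall u' : Hom C A K, k \o u' = h -> u' = u.

Definition pre_Hilbert : Prop :=
  (exists Z : Ob C, is_zero_obj Z) /\
  (forall X1 X2 : Ob C, exists (W : Ob C) (s1 : Hom C X1 W) (r1 : Hom C W X1)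
                 (s2 : Hom C X2 W) (r2 : Hom C W X2), is_ortho_biproduct s1 r1 s2 r2) /\
  (forall (X Y : Ob C) (f : Hom C X Y),
                 exists (K : Ob C) (k : Hom C K X), is_kernel k f /\ isometry k) /\
  (forall (X W : Ob C) (s1 : Hom C X W) (r1 : Hom C W X) (s2 : Hom C X W)
                 (r2 : Hom C W X) (d : Hom C X W),
                 is_ortho_biproduct s1 r1 s2 r2 -> r1 \o d = idm X -> r2 \o d = idm X ->
                 exists (Y : Ob C) (g : Hom C W Y), is_kernel d g).

(** the (canonical) sum of parallel morphisms, f + g = codiag o <f, g>,
    computed through any biproduct of B with itself *)
Definition is_sum {A B : Ob C} (f g h : Hom C A B) : Prop :=
  exists (W : Ob C) (s1 : Hom C B W) (r1 : Hom C W B) (s2 : Hom C B W) (r2 : Hom C W B)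
         (p : Hom C A W) (c : Hom C W B),
    is_biproduct s1 r1 s2 r2 /\ r1 \o p = f /\ r2 \o p = g /\
    c \o s1 = idm B /\ c \o s2 = idm B /\ h = c \o p.

(** a <= b  iff  b - a = y* y for some y, i.e. b = a + y* y *)
Definition le_herm {A : Ob C} (a b : Hom C A A) : Prop :=
  exists (Y : Ob C) (y : Hom C A Y), is_sum a (star y \o y) b.

Definition contraction {X Y : Ob C} (f : Hom C X Y) : Prop :=
  le_herm (star f \o f) (idm X).

(** equalisers inside the wide subcategory of morphisms satisfying P
    (P = everything: equalisers in C;  P = contraction: equalisers in Con(C)) *)
Definition is_equaliser_in (P : forall X Y : Ob C, Hom C X Y -> Prop)
    {E X Y : Ob C} (e : Hom C E X) (f g : Hom C X Y) : Prop :=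
  P _ _ e /\ f \o e = g \o e /\
  forall (W : Ob C) (h : Hom C W X), P _ _ h -> f \o h = g \o h ->
    exists u : Hom C W E, P _ _ u /\ e \o u = h /\
      forall u' : Hom C W E, P _ _ u' -> e \o u' = h -> u' = u.

Definition allmor : forall X Y : Ob C, Hom C X Y -> Prop := fun _ _ _ => True.
Definition conmor : forall X Y : Ob C, Hom C X Y -> Prop := fun X Y f => contraction f.

Definition jointly_monic_in (P : forall X Y : Ob C, Hom C X Y -> Prop)
    {I : Type} {Y : Ob C} {Z : I -> Ob C} (g : forall i : I, Hom C Y (Z i)) : Prop :=
  forall (W : Ob C) (h1 h2 : Hom C W Y), P _ _ h1 -> P _ _ h2 ->
    (forall i : I, g i \o h1 = g i \o h2) -> h1 = h2.

End Defs.

Notation "g \o f" := (comp g f) (at level 40, left associativity).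

(* Biproducts make every hom-set a commutative monoid with bilinear composition.  It is a
   group: on the antidiagonal k : K -> Y (+) Y, the isometric kernel of the adjoint of the
   diagonal d, the swap restricts to t with 1 + t = 0; and since d is a kernel it is closed
   (anything orthogonal to k factors through d), which makes the projection r1 k : K -> Y
   split epi, so 1 + (r1 k) t c = 0.  With cancellation and positivity (y* y = 0 implies
   y = 0) part (i) follows: if g f = 1 with f, g contractions, then
   f* f = 1 + (z f)* (z f) where g* g + z* z = 1, and f* f + y* y = 1 forces z f = 0.
   Equalisers of f, g are isometric kernels of f - g; a factorisation u of a contraction
   through an isometry e has u* u = (e u)* (e u), giving (iii).  For (ii) one replaces
   <h1, h2> by the isometry m onto the closure of its image, whose two components are
   contractions.  For (iv), the comparison maps between an equaliser in Con(C) and an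
   isometric one are mutually inverse contractions, hence isometries by (i). *)

From Stdlib Require Import IndefiniteDescription.

Section PreHilbert.

Variable C : StarCat.

Hypothesis has_zero : exists Z : Ob C, is_zero_obj Z.
Hypothesis has_ortho_biproducts : forall X1 X2 : Ob C,
  exists (W : Ob C) (s1 : Hom C X1 W) (r1 : Hom C W X1) (s2 : Hom C X2 W) (r2 : Hom C W X2),
    is_ortho_biproduct s1 r1 s2 r2.
Hypothesis has_isometric_kernels : forall (X Y : Ob C) (f : Hom C X Y),
  exists (K : Ob C) (k : Hom C K X), is_kernel k f /\ isometry k.
Hypothesis diagonals_are_kernels : forall (X W : Ob C) (s1 : Hom C X W) (r1 : Hom C W X)
    (s2 : Hom C X W) (r2 : Hom C W X) (d : Hom C X W),
  is_ortho_biproduct s1 r1 s2 r2 -> r1 \o d = idm X -> r2 \o d = idm X ->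
  exists (Y : Ob C) (g : Hom C W Y), is_kernel d g.

Ltac cat_simpl :=
  repeat progress rewrite ?star_comp, ?star_star, ?star_idm, ?comp_assoc, ?comp_idl, ?comp_idr.

Lemma comp_eq_l {X Y Z : Ob C} {f : Hom C Y Z} {g : Hom C X Y} {h : Hom C X Z} :
  f \o g = h -> forall V (k : Hom C Z V), k \o f \o g = k \o h.
Proof. intros E V k. rewrite <- comp_assoc, E. reflexivity. Qed.

(* [cat_simpl] keeps composites left-associated, so [f \o g] is found inside [k \o f \o g]
   only through [comp_eq_l]. *)
Ltac rewrite_comp E := first [rewrite E | rewrite (comp_eq_l E)]; cat_simpl.

Lemma zero_mor_unique {X Y : Ob C} (f g : Hom C X Y) :
  is_zero_mor f -> is_zero_mor g -> f = g.
Proof.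
  intros [Z [a [b [[_ HZ] ->]]]] [Z' [a' [b' [[HZ' _] ->]]]].
  destruct (HZ Z') as [u _], (HZ' X) as [v Hv], (HZ Y) as [w Hw].
  assert (Eb : b = b' \o u) by (rewrite (Hw b), (Hw (b' \o u)); reflexivity).
  assert (Ea : a' = u \o a) by (rewrite (Hv a'), (Hv (u \o a)); reflexivity).
  rewrite Eb, Ea. cat_simpl. reflexivity.
Qed.

Lemma zero_mor_exists (X Y : Ob C) : exists f : Hom C X Y, is_zero_mor f.
Proof.
  destruct has_zero as [Z [HX HY]].
  destruct (HX X) as [a _], (HY Y) as [b _].
  exists (b \o a), Z, a, b. split; [split; assumption | reflexivity].
Qed.

Definition zero (X Y : Ob C) : Hom C X Y :=
  proj1_sig (constructive_indefinite_description _ (zero_mor_exists X Y)).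
Arguments zero {X Y}.

Lemma is_zero_mor0 {X Y : Ob C} : is_zero_mor (@zero X Y).
Proof. unfold zero. destruct constructive_indefinite_description. assumption. Qed.

Lemma zero_mor_eq0 {X Y : Ob C} (f : Hom C X Y) : is_zero_mor f -> f = zero.
Proof. intros Hf. exact (zero_mor_unique f zero Hf is_zero_mor0). Qed.

Lemma comp0r {X Y Z : Ob C} (g : Hom C Y Z) : g \o (@zero X Y) = zero.
Proof.
  apply zero_mor_eq0. destruct (@is_zero_mor0 X Y) as [W [a [b [HW ->]]]].
  exists W, a, (g \o b). split; [exact HW | cat_simpl; reflexivity].
Qed.

Lemma comp0l {X Y Z : Ob C} (f : Hom C X Y) : (@zero Y Z) \o f = zero.
Proof.
  apply zero_mor_eq0. destruct (@is_zero_mor0 Y Z) as [W [a [b [HW ->]]]].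
  exists W, (a \o f), b. split; [exact HW | cat_simpl; reflexivity].
Qed.

Lemma star0 {X Y : Ob C} : star (@zero X Y) = zero.
Proof.
  apply zero_mor_eq0. destruct (@is_zero_mor0 X Y) as [W [a [b [HW ->]]]].
  exists W, (star b), (star a). split; [exact HW | cat_simpl; reflexivity].
Qed.

Ltac zero_simpl := repeat progress (cat_simpl; rewrite ?comp0r, ?comp0l, ?star0).

Lemma kernel_comp {K X Y : Ob C} {k : Hom C K X} {f : Hom C X Y} :
  is_kernel k f -> f \o k = zero.
Proof. intros [Hk _]. exact (zero_mor_eq0 _ Hk). Qed.

Lemma kernel_factor {K X Y A : Ob C} {k : Hom C K X} {f : Hom C X Y} {h : Hom C A X} :
  is_kernel k f -> f \o h = zero -> exists u, k \o u = h.
Proof.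
  intros [_ Hk] Eh.
  assert (Zh : is_zero_mor (f \o h)) by (rewrite Eh; exact is_zero_mor0).
  destruct (Hk A h Zh) as [u [Hu _]]. eauto.
Qed.

Lemma isometry_monic {X Y Z : Ob C} (k : Hom C X Y) (x y : Hom C Z X) :
  isometry k -> k \o x = k \o y -> x = y.
Proof.
  intros Hk E. rewrite <- (comp_idl x), <- (comp_idl y), <- Hk, <- !comp_assoc, E.
  reflexivity.
Qed.

Lemma sq_eq0 {X Y : Ob C} (f : Hom C X Y) : star f \o f = zero -> f = zero.
Proof.
  intros E. destruct (has_isometric_kernels _ _ (star f)) as (K & k & Hk & Ik).
  destruct (kernel_factor Hk E) as [u Eu].
  assert (Hu : u = zero).
  { rewrite <- (comp_idl u), <- Ik, <- comp_assoc, Eu.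
    replace (star k \o f) with (star (star f \o k)) by (cat_simpl; reflexivity).
    rewrite (kernel_comp Hk). apply star0. }
  rewrite <- Eu, Hu. zero_simpl. reflexivity.
Qed.

Section Biproduct.
Context {X1 X2 W : Ob C} {s1 : Hom C X1 W} {r1 : Hom C W X1} {s2 : Hom C X2 W} {r2 : Hom C W X2}.
Hypothesis Hb : is_biproduct s1 r1 s2 r2.

Lemma biprod_r1s1 : r1 \o s1 = idm X1. Proof. apply Hb. Qed.
Lemma biprod_r2s2 : r2 \o s2 = idm X2. Proof. apply Hb. Qed.
Lemma biprod_r2s1 : r2 \o s1 = zero. Proof. apply zero_mor_eq0, Hb. Qed.
Lemma biprod_r1s2 : r1 \o s2 = zero. Proof. apply zero_mor_eq0, Hb. Qed.

Lemma biprod_pair {A : Ob C} (f1 : Hom C A X1) (f2 : Hom C A X2) :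
  exists h, r1 \o h = f1 /\ r2 \o h = f2.
Proof. destruct Hb as (_&_&_&_&P&_). destruct (P A f1 f2) as [h [? [? _]]]. eauto. Qed.

Lemma biprod_copair {A : Ob C} (f1 : Hom C X1 A) (f2 : Hom C X2 A) :
  exists h, h \o s1 = f1 /\ h \o s2 = f2.
Proof. destruct Hb as (_&_&_&_&_&P). destruct (P A f1 f2) as [h [? [? _]]]. eauto. Qed.

Lemma biprod_pair_ext {A : Ob C} (h h' : Hom C A W) :
  r1 \o h = r1 \o h' -> r2 \o h = r2 \o h' -> h = h'.
Proof.
  intros E1 E2. destruct Hb as (_&_&_&_&P&_).
  destruct (P A (r1 \o h) (r2 \o h)) as [h0 [_ [_ U]]].
  rewrite (U h), (U h'); auto.
Qed.

Lemma biprod_copair_ext {A : Ob C} (h h' : Hom C W A) :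
  h \o s1 = h' \o s1 -> h \o s2 = h' \o s2 -> h = h'.
Proof.
  intros E1 E2. destruct Hb as (_&_&_&_&_&P).
  destruct (P A (h \o s1) (h \o s2)) as [h0 [_ [_ U]]].
  rewrite (U h), (U h'); auto.
Qed.

Lemma biprod_sym : is_biproduct s2 r2 s1 r1.
Proof.
  destruct Hb as (E1 & E2 & Z21 & Z12 & P & Q).
  repeat split; auto.
  - intros A f1 f2. destruct (P A f2 f1) as [h [? [? ?]]]. eauto.
  - intros A f1 f2. destruct (Q A f2 f1) as [h [? [? ?]]]. eauto.
Qed.

End Biproduct.

Ltac biprod_simpl Hb :=
  repeat progress (try rewrite_comp (biprod_r1s1 Hb); try rewrite_comp (biprod_r2s2 Hb);
                   try rewrite_comp (biprod_r1s2 Hb); try rewrite_comp (biprod_r2s1 Hb);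
                   zero_simpl).

Lemma biprod_exists (X1 X2 : Ob C) : exists W (s1 : Hom C X1 W) (r1 : Hom C W X1)
  (s2 : Hom C X2 W) (r2 : Hom C W X2), is_biproduct s1 r1 s2 r2.
Proof.
  destruct (has_ortho_biproducts X1 X2) as (W & s1 & r1 & s2 & r2 & Hb & _).
  exists W, s1, r1, s2, r2. exact Hb.
Qed.

Lemma biprod_swap_exists {X W : Ob C} {s1 r1 s2 r2}
  (Hb : @is_biproduct C X X W s1 r1 s2 r2) :
  exists tau : Hom C W W, r1 \o tau = r2 /\ r2 \o tau = r1 /\ tau \o s1 = s2 /\ tau \o s2 = s1.
Proof.
  destruct (biprod_pair Hb r2 r1) as [tau [T1 T2]].
  exists tau. split; [exact T1 | split; [exact T2 | split]];
    apply (biprod_pair_ext Hb); cat_simpl; rewrite_comp T1 || rewrite_comp T2; biprod_simpl Hb;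
    reflexivity.
Qed.

Lemma is_sum_biprod {A B Y1 Y2 W : Ob C}
  {s1 : Hom C Y1 W} {r1 : Hom C W Y1} {s2 : Hom C Y2 W} {r2 : Hom C W Y2}
  (Hb : is_biproduct s1 r1 s2 r2) (h : Hom C W B) (p : Hom C A W)
  (a1 : Hom C Y1 B) (a2 : Hom C Y2 B) (x1 : Hom C A Y1) (x2 : Hom C A Y2) (s : Hom C A B) :
  is_sum (a1 \o x1) (a2 \o x2) s ->
  h \o s1 = a1 -> h \o s2 = a2 -> r1 \o p = x1 -> r2 \o p = x2 -> s = h \o p.
Proof.
  intros (V & t1 & q1 & t2 & q2 & q & c & Hv & Q1 & Q2 & C1 & C2 & ->) H1 H2 P1 P2.
  destruct (biprod_pair Hv (a1 \o r1) (a2 \o r2)) as [f [F1 F2]].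
  assert (Fp : f \o p = q).
  { apply (biprod_pair_ext Hv); cat_simpl.
    - rewrite_comp F1. rewrite_comp P1. congruence.
    - rewrite_comp F2. rewrite_comp P2. congruence. }
  assert (Fs1 : f \o s1 = t1 \o a1).
  { apply (biprod_pair_ext Hv); cat_simpl; [rewrite_comp F1 | rewrite_comp F2];
      biprod_simpl Hb; biprod_simpl Hv; reflexivity. }
  assert (Fs2 : f \o s2 = t2 \o a2).
  { apply (biprod_pair_ext Hv); cat_simpl; [rewrite_comp F1 | rewrite_comp F2];
      biprod_simpl Hb; biprod_simpl Hv; reflexivity. }
  assert (Hc : c \o f = h).
  { apply (biprod_copair_ext Hb); cat_simpl.
    - rewrite_comp Fs1. rewrite_comp C1. congruence.
    - rewrite_comp Fs2. rewrite_comp C2. congruence. }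
  rewrite <- Hc, <- Fp. cat_simpl. reflexivity.
Qed.

Lemma is_sum_exists {A B : Ob C} (a b : Hom C A B) : exists s, is_sum a b s.
Proof.
  destruct (biprod_exists B B) as (W & s1 & r1 & s2 & r2 & Hb).
  destruct (biprod_pair Hb a b) as [p [P1 P2]].
  destruct (biprod_copair Hb (idm B) (idm B)) as [c [C1 C2]].
  exists (c \o p), W, s1, r1, s2, r2, p, c. auto 10.
Qed.

Definition add {A B : Ob C} (a b : Hom C A B) : Hom C A B :=
  proj1_sig (constructive_indefinite_description _ (is_sum_exists a b)).

Declare Scope hom_scope.
Local Notation "a + b" := (add a b) : hom_scope.
Local Open Scope hom_scope.

Lemma is_sum_add {A B : Ob C} (a b : Hom C A B) : is_sum a b (a + b).
Proof. unfold add. destruct constructive_indefinite_description. assumption. Qed.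

Lemma add_biprod {A B Y1 Y2 W : Ob C}
  {s1 : Hom C Y1 W} {r1 : Hom C W Y1} {s2 : Hom C Y2 W} {r2 : Hom C W Y2}
  (Hb : is_biproduct s1 r1 s2 r2) {h : Hom C W B} {p : Hom C A W}
  {a1 : Hom C Y1 B} {a2 : Hom C Y2 B} {x1 : Hom C A Y1} {x2 : Hom C A Y2} :
  h \o s1 = a1 -> h \o s2 = a2 -> r1 \o p = x1 -> r2 \o p = x2 ->
  h \o p = a1 \o x1 + a2 \o x2.
Proof. intros. symmetry. eapply is_sum_biprod; eauto using is_sum_add. Qed.

Lemma add_codiag {A B W : Ob C}
  {s1 : Hom C B W} {r1 : Hom C W B} {s2 : Hom C B W} {r2 : Hom C W B}
  (Hb : is_biproduct s1 r1 s2 r2) {c : Hom C W B} {p : Hom C A W} {x1 x2 : Hom C A B} :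
  c \o s1 = idm B -> c \o s2 = idm B -> r1 \o p = x1 -> r2 \o p = x2 -> c \o p = x1 + x2.
Proof. intros. rewrite <- (comp_idl x1), <- (comp_idl x2). eapply add_biprod; eauto. Qed.

Lemma is_sum_eq_add {A B : Ob C} (a b s : Hom C A B) : is_sum a b s -> s = a + b.
Proof.
  intros (W & s1 & r1 & s2 & r2 & p & c & Hb & P1 & P2 & C1 & C2 & ->).
  exact (add_codiag Hb C1 C2 P1 P2).
Qed.

Lemma addrC {A B : Ob C} (a b : Hom C A B) : a + b = b + a.
Proof.
  destruct (biprod_exists B B) as (W & s1 & r1 & s2 & r2 & Hb).
  destruct (biprod_pair Hb a b) as [p [P1 P2]].
  destruct (biprod_copair Hb (idm B) (idm B)) as [c [C1 C2]].
  rewrite <- (add_codiag Hb C1 C2 P1 P2). exact (add_codiag (biprod_sym Hb) C2 C1 P2 P1).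
Qed.

Lemma addr0 {A B : Ob C} (a : Hom C A B) : a + zero = a.
Proof.
  destruct (biprod_exists B B) as (W & s1 & r1 & s2 & r2 & Hb).
  destruct (biprod_copair Hb (idm B) (idm B)) as [c [C1 C2]].
  rewrite <- (add_codiag Hb (p := s1 \o a) C1 C2); cat_simpl; biprod_simpl Hb;
    [rewrite_comp C1 | |]; reflexivity.
Qed.

Lemma add0r {A B : Ob C} (a : Hom C A B) : zero + a = a.
Proof. rewrite addrC. apply addr0. Qed.

Lemma compDr {A B D : Ob C} (g : Hom C B D) (a b : Hom C A B) : g \o (a + b) = g \o a + g \o b.
Proof.
  destruct (biprod_exists B B) as (W & s1 & r1 & s2 & r2 & Hb).
  destruct (biprod_pair Hb a b) as [p [P1 P2]].
  destruct (biprod_copair Hb (idm B) (idm B)) as [c [C1 C2]].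
  rewrite <- (add_codiag Hb C1 C2 P1 P2), comp_assoc.
  apply (add_biprod Hb); auto; cat_simpl; [rewrite_comp C1 | rewrite_comp C2]; reflexivity.
Qed.

Lemma compDl {A' A B : Ob C} (a b : Hom C A B) (x : Hom C A' A) : (a + b) \o x = a \o x + b \o x.
Proof.
  destruct (biprod_exists B B) as (W & s1 & r1 & s2 & r2 & Hb).
  destruct (biprod_pair Hb a b) as [p [P1 P2]].
  destruct (biprod_copair Hb (idm B) (idm B)) as [c [C1 C2]].
  rewrite <- (add_codiag Hb C1 C2 P1 P2), <- comp_assoc.
  apply (add_codiag Hb); auto; cat_simpl; [rewrite_comp P1 | rewrite_comp P2]; reflexivity.
Qed.

Lemma addrA {A B : Ob C} (a b d : Hom C A B) : a + (b + d) = a + b + d.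
Proof.
  destruct (biprod_exists B B) as (W & s1 & r1 & s2 & r2 & Hw).
  destruct (biprod_exists W B) as (V & u1 & q1 & u2 & q2 & Hv).
  destruct (biprod_copair Hw (idm B) (idm B)) as [c [C1 C2]].
  destruct (biprod_pair Hw a b) as [pab [Pa Pb]].
  destruct (biprod_pair Hv pab d) as [p [P1 P2]].
  destruct (biprod_copair Hv c (idm B)) as [h [H1 H2]].
  destruct (biprod_copair Hv r2 (idm B)) as [g [G1 G2]].
  destruct (biprod_pair Hw (r1 \o q1) g) as [f [F1 F2]].
  (* [h] sums the three components as (a + b) + d, while [c \o f] regroups them as a + (b + d). *)
  assert (Hab_d : h \o p = a + b + d).
  { rewrite (add_biprod Hv H1 H2 P1 P2), (add_codiag Hw C1 C2 Pa Pb), comp_idl. reflexivity. }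
  assert (Hbd : g \o p = b + d).
  { rewrite (add_biprod Hv G1 G2 P1 P2), Pb, comp_idl. reflexivity. }
  assert (Hcf : c \o f = h).
  { apply (biprod_copair_ext Hv).
    - assert (Fu1 : f \o u1 = idm W).
      { apply (biprod_pair_ext Hw); cat_simpl; [rewrite_comp F1 | rewrite_comp F2];
          biprod_simpl Hv; congruence. }
      rewrite <- comp_assoc, Fu1, comp_idr, H1. reflexivity.
    - assert (Fu2 : f \o u2 = s2).
      { apply (biprod_pair_ext Hw); cat_simpl; [rewrite_comp F1 | rewrite_comp F2];
          biprod_simpl Hv; biprod_simpl Hw; congruence. }
      rewrite <- comp_assoc, Fu2, C2, H2. reflexivity. }
  rewrite <- Hab_d, <- Hcf, <- comp_assoc, <- Hbd. symmetry.
  apply (add_codiag Hw C1 C2); cat_simpl; [rewrite_comp F1; rewrite_comp P1; exact Pa | rewrite F2; reflexivity].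
Qed.

Lemma ortho_biprod_sq {A X1 X2 W : Ob C}
  {s1 : Hom C X1 W} {r1 : Hom C W X1} {s2 : Hom C X2 W} {r2 : Hom C W X2}
  (Hb : is_ortho_biproduct s1 r1 s2 r2) (p : Hom C A W) :
  star p \o p = star (r1 \o p) \o (r1 \o p) + star (r2 \o p) \o (r2 \o p).
Proof.
  destruct Hb as (Hb & -> & ->).
  apply (add_biprod Hb); cat_simpl; reflexivity.
Qed.

Lemma add_sq_eq0 {X Y1 Y2 : Ob C} (y1 : Hom C X Y1) (y2 : Hom C X Y2) :
  star y1 \o y1 + star y2 \o y2 = zero -> y1 = zero.
Proof.
  intros E.
  destruct (has_ortho_biproducts Y1 Y2) as (W & s1 & r1 & s2 & r2 & Hb).
  destruct (biprod_pair (proj1 Hb) y1 y2) as [p [P1 P2]].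
  rewrite <- P1, <- P2, <- (ortho_biprod_sq Hb) in E.
  rewrite <- P1, (sq_eq0 _ E). apply comp0r.
Qed.

Lemma contractionP {X Y : Ob C} (f : Hom C X Y) :
  contraction f <-> exists Z (y : Hom C X Z), star f \o f + star y \o y = idm X.
Proof.
  split; intros (Z & y & H); exists Z, y.
  - symmetry. apply is_sum_eq_add. exact H.
  - rewrite <- H. apply is_sum_add.
Qed.

Lemma contraction_eq_sq {X Y Y' : Ob C} (f : Hom C X Y) (g : Hom C X Y') :
  star f \o f = star g \o g -> contraction g -> contraction f.
Proof. unfold contraction. intros ->. auto. Qed.

Lemma isometry_contraction {X Y : Ob C} {f : Hom C X Y} : isometry f -> contraction f.
Proof.
  intros Hf. apply contractionP. exists X, (@zero X X).
  unfold isometry in Hf. rewrite Hf, star0, comp0r. apply addr0.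
Qed.

Lemma kernel_star_kernel_star_dense {A B K M : Ob C} {D : Hom C A B} {k : Hom C K B} {m : Hom C M B} :
  is_kernel k (star D) -> isometry k -> is_kernel m (star k) -> isometry m ->
  exists u : Hom C A M, m \o u = D /\ forall V (v : Hom C M V), v \o u = zero -> v = zero.
Proof.
  intros Hk Ik Hm Im.
  assert (Dk : star k \o D = zero).
  { rewrite <- (star_star D), <- star_comp, (kernel_comp Hk). apply star0. }
  destruct (kernel_factor Hm Dk) as [u Eu].
  exists u. split; [exact Eu |]. intros V v Hv.
  assert (Hvu : v \o star m \o D = zero) by (rewrite <- Eu; cat_simpl; rewrite_comp Im; exact Hv).
  assert (Hmv : star D \o (m \o star v) = zero).
  { rewrite <- star0, <- Hvu. cat_simpl. reflexivity. }
  (* [m \o star v] lies both in the kernel [k] of [star D] and in the kernel [m] of [star k]. *)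
  destruct (kernel_factor Hk Hmv) as [w Ew].
  assert (Hw : w = zero).
  { rewrite <- (comp_idl w), <- Ik, <- comp_assoc, Ew, comp_assoc, (kernel_comp Hm).
    apply comp0l. }
  assert (Hv' : star v = zero).
  { apply (isometry_monic m); [exact Im |]. rewrite <- Ew, Hw. zero_simpl. reflexivity. }
  rewrite <- (star_star v), Hv'. apply star0.
Qed.

Lemma closure_exists {A B : Ob C} (D : Hom C A B) :
  exists M (m : Hom C M B) (u : Hom C A M), isometry m /\ m \o u = D /\
    forall V (phi : Hom C B V), phi \o D = zero -> phi \o m = zero.
Proof.
  destruct (has_isometric_kernels _ _ (star D)) as (K & k & Hk & Ik).
  destruct (has_isometric_kernels _ _ (star k)) as (M & m & Hm & Im).
  destruct (kernel_star_kernel_star_dense Hk Ik Hm Im) as (u & Eu & Du).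
  exists M, m, u. split; [exact Im | split; [exact Eu |]].
  intros V phi E. apply Du. rewrite <- comp_assoc, Eu. exact E.
Qed.

Lemma kernel_closed {X W Q K V : Ob C} {d : Hom C X W} {q : Hom C W Q} {k : Hom C K W}
  (h : Hom C V W) :
  is_kernel d q -> is_kernel k (star d) -> isometry k -> star k \o h = zero ->
  exists w, d \o w = h.
Proof.
  intros Hd Hk Ik Eh.
  destruct (has_isometric_kernels _ _ (star k)) as (M & m & Hm & Im).
  destruct (kernel_star_kernel_star_dense Hk Ik Hm Im) as (u & Eu & Du).
  destruct (kernel_factor Hm Eh) as [v Ev].
  assert (Eq : q \o m = zero) by (apply Du; rewrite <- comp_assoc, Eu; exact (kernel_comp Hd)).
  destruct (kernel_factor Hd Eq) as [w Ew].
  exists (w \o v). rewrite comp_assoc, Ew. exact Ev.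
Qed.

Section Antidiagonal.
Context {Y W K : Ob C} {s1 : Hom C Y W} {r1 : Hom C W Y} {s2 : Hom C Y W} {r2 : Hom C W Y}
  {d : Hom C Y W} {k : Hom C K W}.
Hypotheses (Hb : is_ortho_biproduct s1 r1 s2 r2) (D1 : r1 \o d = idm Y) (D2 : r2 \o d = idm Y)
  (Hk : is_kernel k (star d)) (Ik : isometry k).

Lemma star_diag_s1 : star d \o s1 = idm Y.
Proof.
  destruct Hb as (_ & E1 & _).
  rewrite <- (star_star s1), <- E1, <- star_comp, D1. apply star_idm.
Qed.

Lemma star_diag_s2 : star d \o s2 = idm Y.
Proof.
  destruct Hb as (_ & _ & E2).
  rewrite <- (star_star s2), <- E2, <- star_comp, D2. apply star_idm.
Qed.

Lemma antidiagonal_sign :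
  exists t : Hom C K K, idm K + t = zero /\ t \o t = idm K /\ r2 \o k = r1 \o k \o t.
Proof.
  destruct Hb as (Hb' & _ & _).
  assert (Hab : r1 \o k + r2 \o k = zero).
  { rewrite <- (add_codiag Hb' star_diag_s1 star_diag_s2 eq_refl eq_refl). exact (kernel_comp Hk). }
  destruct (biprod_swap_exists Hb') as (tau & T1 & T2 & Ts1 & Ts2).
  assert (TT : tau \o tau = idm W).
  { apply (biprod_pair_ext Hb'); cat_simpl; [rewrite_comp T1; rewrite T2 | rewrite_comp T2; rewrite T1];
      reflexivity. }
  assert (Dt : star d \o tau = star d).
  { apply (biprod_copair_ext Hb'); cat_simpl; [rewrite_comp Ts1 | rewrite_comp Ts2];
      rewrite star_diag_s1, star_diag_s2; reflexivity. }
  assert (Htk : star d \o (tau \o k) = zero) by (rewrite comp_assoc, Dt; exact (kernel_comp Hk)).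
  destruct (kernel_factor Hk Htk) as [t Et].
  exists t. split; [| split].
  - apply (isometry_monic k); [exact Ik |]. rewrite compDr, comp_idr, Et, comp0r.
    apply (biprod_pair_ext Hb'); rewrite !compDr, comp0r; cat_simpl;
      [rewrite_comp T1 | rewrite_comp T2; rewrite addrC]; exact Hab.
  - apply (isometry_monic k); [exact Ik |].
    rewrite comp_assoc, Et, <- comp_assoc, Et, comp_assoc, TT. cat_simpl. reflexivity.
  - rewrite <- comp_assoc, Et, comp_assoc, T1. reflexivity.
Qed.

Lemma antidiagonal_retraction {Q : Ob C} {q : Hom C W Q} :
  is_kernel d q -> exists c : Hom C Y K, r1 \o k \o c = idm Y.
Proof.
  intros Hd.
  destruct antidiagonal_sign as (t & Ht & Htt & Hba).
  destruct Hb as (Hb' & E1 & _).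
  assert (Ka : star k \o s1 = star (r1 \o k)) by (rewrite E1; cat_simpl; reflexivity).
  (* With a := r1 \o k, the map s1 + k t a* is orthogonal to k, so it factors through d. *)
  assert (Hh : star k \o (s1 + k \o t \o star (r1 \o k)) = zero).
  { rewrite compDr, Ka, !comp_assoc. rewrite Ik, comp_idl.
    rewrite <- (comp_idl (star (r1 \o k))) at 1. rewrite <- compDl, Ht. apply comp0l. }
  destruct (kernel_closed _ Hd Hk Ik Hh) as [w Ew].
  assert (Hw1 : w = idm Y + r1 \o k \o t \o star (r1 \o k)).
  { transitivity (r1 \o (d \o w)); [rewrite comp_assoc, D1, comp_idl; reflexivity |].
    rewrite Ew, compDr, (biprod_r1s1 Hb'), !comp_assoc. reflexivity. }
  assert (Hw2 : w = r1 \o k \o star (r1 \o k)).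
  { transitivity (r2 \o (d \o w)); [rewrite comp_assoc, D2, comp_idl; reflexivity |].
    rewrite Ew, compDr, (biprod_r2s1 Hb'), add0r, !comp_assoc, Hba, <- (comp_assoc _ t t), Htt, comp_idr. reflexivity. }
  exists (star (r1 \o k) + star (r1 \o k)).
  rewrite compDr, <- Hw2 at 1. rewrite Hw1, <- addrA.
  transitivity (idm Y + r1 \o k \o (t + idm K) \o star (r1 \o k)).
  - rewrite compDr, compDl, comp_idr. reflexivity.
  - rewrite (addrC t), Ht, comp0r, comp0l, addr0. reflexivity.
Qed.

End Antidiagonal.

Lemma add_opp_exists {X Y : Ob C} (f : Hom C X Y) : exists g, f + g = zero.
Proof.
  destruct (has_ortho_biproducts Y Y) as (W & s1 & r1 & s2 & r2 & Hb).
  destruct (biprod_pair (proj1 Hb) (idm Y) (idm Y)) as [d [D1 D2]].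
  destruct (diagonals_are_kernels _ _ _ _ _ _ _ Hb D1 D2) as (Q & q & Hd).
  destruct (has_isometric_kernels _ _ (star d)) as (K & k & Hk & Ik).
  destruct (antidiagonal_sign Hb D1 D2 Hk Ik) as (t & Ht & _ & _).
  destruct (antidiagonal_retraction Hb D1 D2 Hk Ik Hd) as [c Hc].
  exists (r1 \o k \o t \o c \o f).
  assert (N : idm Y + r1 \o k \o t \o c = zero).
  { transitivity (r1 \o k \o (idm K + t) \o c).
    - rewrite compDr, compDl, comp_idr, Hc. reflexivity.
    - rewrite Ht. zero_simpl. reflexivity. }
  rewrite <- (comp_idl f) at 1. rewrite <- compDl, N. apply comp0l.
Qed.

Lemma addrI {X Y : Ob C} (x y z : Hom C X Y) : x + y = x + z -> y = z.
Proof.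
  intros E. destruct (add_opp_exists x) as [g Hg].
  rewrite <- (add0r y), <- (add0r z), <- Hg, (addrC x g), <- !addrA, E. reflexivity.
Qed.

Lemma difference_exists {X Y : Ob C} (f g : Hom C X Y) :
  exists r : Hom C X Y, forall V (h : Hom C V X), r \o h = zero <-> f \o h = g \o h.
Proof.
  destruct (add_opp_exists g) as [n Hn].
  exists (f + n). intros V h. rewrite compDl. split; intros E.
  - apply (addrI (n \o h)). rewrite addrC, E, <- compDl, addrC, Hn, comp0l. reflexivity.
  - rewrite E, <- compDl, Hn. apply comp0l.
Qed.

Lemma split_mono_contraction_isometry {X Y : Ob C} (f : Hom C X Y) (g : Hom C Y X) :
  contraction f -> contraction g -> g \o f = idm X -> isometry f.
Proof.
  intros Hf Hg Hgf.
  apply contractionP in Hf as (Y1 & y & Ef). apply contractionP in Hg as (Z1 & z & Eg).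
  assert (Eff : star f \o f = idm X + star (z \o f) \o (z \o f)).
  { transitivity (star f \o (star g \o g + star z \o z) \o f); [rewrite Eg; cat_simpl; reflexivity |].
    rewrite compDr, compDl.
    replace (star f \o (star g \o g) \o f) with (star (g \o f) \o (g \o f)) by (cat_simpl; reflexivity).
    rewrite Hgf. cat_simpl. reflexivity. }
  rewrite Eff, <- addrA in Ef.
  assert (Hzf : z \o f = zero).
  { apply (add_sq_eq0 _ y). apply (addrI (idm X)). rewrite addr0. exact Ef. }
  unfold isometry. rewrite Eff, Hzf, star0, comp0r, addr0. reflexivity.
Qed.

Lemma jointly_monic_contractions {I : Type} {Y : Ob C} {Z : I -> Ob C}
  (g : forall i : I, Hom C Y (Z i)) :
  jointly_monic_in (@conmor C) g -> jointly_monic_in (@allmor C) g.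
Proof.
  intros Hg W h1 h2 _ _ Eh.
  destruct (has_ortho_biproducts Y Y) as (V & s1 & r1 & s2 & r2 & Hb).
  destruct (biprod_pair (proj1 Hb) h1 h2) as [p [P1 P2]].
  destruct (closure_exists p) as (M & m & u & Im & Eu & Dense).
  pose proof (ortho_biprod_sq Hb m) as Sq.
  assert (C1 : contraction (r1 \o m)).
  { apply contractionP. exists Y, (r2 \o m). rewrite <- Sq. exact Im. }
  assert (C2 : contraction (r2 \o m)).
  { apply contractionP. exists Y, (r1 \o m). rewrite addrC, <- Sq. exact Im. }
  assert (Em : r1 \o m = r2 \o m).
  { apply (Hg M _ _ C1 C2). intros i.
    destruct (difference_exists (g i \o r1) (g i \o r2)) as [rho Hrho].
    rewrite !comp_assoc. apply Hrho, Dense, Hrho.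
    rewrite <- !comp_assoc, P1, P2. apply Eh. }
  rewrite <- P1, <- P2, <- Eu, !comp_assoc, Em. reflexivity.
Qed.

Lemma isometric_equaliser_contraction {E X Y : Ob C} (e : Hom C E X) (f g : Hom C X Y) :
  is_equaliser_in (@allmor C) e f g -> isometry e -> is_equaliser_in (@conmor C) e f g.
Proof.
  intros (_ & Efg & U) Ie.
  split; [exact (isometry_contraction Ie) | split; [exact Efg |]].
  intros W h Ch Eh. destruct (U W h I Eh) as (u & _ & Eu & Uu).
  exists u. split; [| split; [exact Eu |]].
  - apply (contraction_eq_sq u h); [| exact Ch].
    rewrite <- Eu. cat_simpl. rewrite_comp Ie. reflexivity.
  - intros u' _ Eu'. exact (Uu u' I Eu').
Qed.

Lemma isometric_equaliser_exists {X Y : Ob C} (f g : Hom C X Y) :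
  exists E (e : Hom C E X), is_equaliser_in (@conmor C) e f g /\ isometry e.
Proof.
  destruct (difference_exists f g) as [rho Hrho].
  destruct (has_isometric_kernels _ _ rho) as (K & e & He & Ie).
  exists K, e. split; [| exact Ie].
  apply isometric_equaliser_contraction; [| exact Ie].
  split; [exact I | split; [apply Hrho, (kernel_comp He) |]].
  intros W h _ Eh. apply Hrho in Eh. destruct (kernel_factor He Eh) as [u Eu].
  exists u. split; [exact I | split; [exact Eu |]].
  intros u' _ Eu'. apply (isometry_monic e); [exact Ie |]. rewrite Eu, Eu'. reflexivity.
Qed.

Lemma contraction_equaliser_isometry {E X Y : Ob C} (e : Hom C E X) (f g : Hom C X Y) :
  is_equaliser_in (@conmor C) e f g -> isometry e.
Proof.
  intros (Ce & Efg & U).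
  destruct (isometric_equaliser_exists f g) as (M & m & (Cm & Efm & Um) & Im).
  destruct (Um E e Ce Efg) as (phi & Cphi & Ephi & _).
  destruct (U M m Cm Efm) as (psi & Cpsi & Epsi & _).
  assert (Hphipsi : phi \o psi = idm M).
  { apply (isometry_monic m); [exact Im |]. rewrite comp_assoc, Ephi, Epsi, comp_idr. reflexivity. }
  assert (Hpsiphi : psi \o phi = idm E).
  { destruct (U E e Ce Efg) as (u0 & _ & _ & Uu0).
    assert (Cpp : conmor (psi \o phi)).
    { apply (contraction_eq_sq _ e); [| exact Ce]. rewrite <- Ephi. cat_simpl.
      rewrite_comp (split_mono_contraction_isometry psi phi Cpsi Cphi Hphipsi).
      rewrite_comp Im. reflexivity. }
    assert (Cid : conmor (idm E)) by (apply isometry_contraction; unfold isometry; cat_simpl; reflexivity).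
    rewrite (Uu0 _ Cpp), (Uu0 _ Cid); [reflexivity | apply comp_idr |].
    rewrite comp_assoc, Epsi, Ephi. reflexivity. }
  unfold isometry. rewrite <- Ephi. cat_simpl. rewrite_comp Im.
  exact (split_mono_contraction_isometry phi psi Cphi Cpsi Hpsiphi).
Qed.

End PreHilbert.

Theorem proposition7p4 (C : StarCat) (HC : pre_Hilbert C) :
  (* (i) split monomorphisms in Con(C) are isometric *)
  (forall (X Y : Ob C) (f : Hom C X Y) (g : Hom C Y X),
      contraction f -> contraction g -> g \o f = idm X -> isometry f) /\
  (* (ii) Con(C) -> C preserves jointly monic wide spans *)
  (forall (I : Type) (Y : Ob C) (Z : I -> Ob C) (g : forall i : I, Hom C Y (Z i)),
      (forall i : I, contraction (g i)) ->
      jointly_monic_in (@conmor C) g -> jointly_monic_in (@allmor C) g) /\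
  (* (iii) Con(C) -> C creates isometric equalisers ... *)
  (forall (E X Y : Ob C) (e : Hom C E X) (f g : Hom C X Y),
      contraction f -> contraction g ->
      is_equaliser_in (@allmor C) e f g -> isometry e ->
      is_equaliser_in (@conmor C) e f g) /\
  (* ... in particular every parallel pair in Con(C) has an isometric equaliser *)
  (forall (X Y : Ob C) (f g : Hom C X Y),
      contraction f -> contraction g ->
      exists (E : Ob C) (e : Hom C E X), is_equaliser_in (@conmor C) e f g /\ isometry e) /\
  (* (iv) every equaliser in Con(C) is isometric *)
  (forall (E X Y : Ob C) (e : Hom C E X) (f g : Hom C X Y),
      contraction f -> contraction g ->
      is_equaliser_in (@conmor C) e f g -> isometry e).
Proof.
  destruct HC as (R1 & R2 & R3 & R4).
  split; [| split; [| split; [| split]]].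
  - intros X Y f g Hf Hg Hgf. eapply split_mono_contraction_isometry; eassumption.
  - intros I Y Z g _. eapply jointly_monic_contractions; eassumption.
  - intros E X Y e f g _ _. eapply isometric_equaliser_contraction; eassumption.
  - intros X Y f g _ _. eapply isometric_equaliser_exists; eassumption.
  - intros E X Y e f g _ _. eapply contraction_equaliser_isometry; eassumption.
Qed.
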